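(* Suppose $\psi\in\mathcal{B}$ is pseudoconcave on a neighbourhood of $+\infty$. Then there exists a concave function $\psi_{0}:(0,\infty)\to(0,\infty)$ such that $\psi/\psi_{0}$ and $\psi_{0}/\psi$ are bounded on $(\varepsilon,\infty)$ for every $\varepsilon>0$.
   Context: $\mathcal{B}$ is the set of Borel measurable $\psi:(0,\infty)\to(0,\infty)$ bounded on each compact $[a,b]\subset(0,\infty)$ and such that $1/\psi$ is bounded on each $[r,\infty)$, $r>0$. A function $\psi:(0,\infty)\to(0,\infty)$ is pseudoconcave on $(r,\infty)$ ($r\geq0$) if there is a concave $\psi_{1}:(r,\infty)\to(0,\infty)$ with $\psi/\psi_{1}$ and $\psi_{1}/\psi$ bounded on $(r,\infty)$; it is pseudoconcave on a neighbourhood of $+\infty$ if it is pseudoconcave on $(r,\infty)$ for some sufficiently large $r$. *)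

From HB Require Import structures.
From mathcomp Require Import all_boot all_order all_algebra.
From mathcomp Require Import all_classical all_reals all_analysis.
Set Implicit Arguments. Unset Strict Implicit. Unset Printing Implicit Defensive.
Import Order.TTheory GRing.Theory Num.Theory.
Local Open Scope classical_set_scope.
Local Open Scope ring_scope.

(* Functions (0,oo) -> (0,oo) are represented as total functions R -> R;
   only their values on (0,oo) matter. *)

Definition concave_on_from {R : realType} (r : R) (f : R -> R) : Prop :=
  forall x y t : R, r < x -> r < y -> 0 <= t -> t <= 1 ->
    t * f x + (1 - t) * f y <= f (t * x + (1 - t) * y).

Definition bounded_on {R : realType} (A : set R) (f : R -> R) : Prop :=
  exists M : R, forall x, A x -> `|f x| <= M.

Definition in_B {R : realType} (psi : R -> R) : Prop :=
  measurable_fun (`]0, +oo[ : set R) psi /\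
  (forall x : R, 0 < x -> 0 < psi x) /\
  (forall a b : R, 0 < a -> bounded_on `[a, b] psi) /\
  (forall r : R, 0 < r -> bounded_on `[r, +oo[ (fun x => (psi x)^-1)).

Definition pseudoconcave_on {R : realType} (r : R) (psi : R -> R) : Prop :=
  exists psi1 : R -> R,
    (forall x, r < x -> 0 < psi1 x) /\
    concave_on_from r psi1 /\
    bounded_on `]r, +oo[ (fun x => psi x / psi1 x) /\
    bounded_on `]r, +oo[ (fun x => psi1 x / psi x).

Definition pseudoconcave_near_pinfty {R : realType} (psi : R -> R) : Prop :=
  exists r : R, 0 <= r /\ pseudoconcave_on r psi.

(** Take [psi0 x := f (x + s)], where [f] is the concave comparison function
    on [(r, +oo)] and [s > r]. A positive concave function on a half-line is
    nondecreasing and grows at most linearly, so [f (x + s)] lies between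
    [f x] and [2 f x] for large [x]; hence [psi0] is comparable to [psi] near
    [+oo]. On a bounded part [(eps, c]], [psi0] is bounded above and below by
    positive constants, and so is [psi] by the conditions defining [B]. *)
From HB Require Import structures.
From mathcomp Require Import all_boot all_order all_algebra.
From mathcomp Require Import all_classical all_reals all_analysis.
From mathcomp Require Import ring lra.
Import Order.TTheory GRing.Theory Num.Theory.
Local Open Scope classical_set_scope.
Local Open Scope ring_scope.

Lemma concave_on_from_chord {R : realType} {r : R} {f : R -> R} {a y z : R} :
  concave_on_from r f -> r < a -> a <= y -> y <= z -> a < z ->
  (z - y) * f a + (y - a) * f z <= (z - a) * f y.
Proof.
move=> f_cvx ra ay yz az.
have za_gt0 : 0 < z - a by rewrite subr_gt0.
set t := (z - y) / (z - a).
have t_ge0 : 0 <= t by rewrite /t divr_ge0 //; lra.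
have t_le1 : t <= 1 by rewrite /t ler_pdivrMr // mul1r; lra.
have := f_cvx a z t ra (lt_trans ra az) t_ge0 t_le1.
have -> : t * a + (1 - t) * z = y by rewrite /t; field; rewrite gt_eqF.
rewrite -(ler_pM2l za_gt0).
by congr (_ <= _); rewrite /t; field; rewrite gt_eqF.
Qed.

Lemma concave_on_from_shift {R : realType} {r : R} (r' s : R) {f : R -> R} :
  concave_on_from r f -> r <= r' + s ->
  concave_on_from r' (fun x => f (x + s)).
Proof.
move=> f_cvx rs x y t xr yr t0 t1.
have := f_cvx (x + s) (y + s) t ltac:(lra) ltac:(lra) t0 t1.
by have -> : t * (x + s) + (1 - t) * (y + s) = t * x + (1 - t) * y + s by ring.
Qed.

Section PositiveConcave.
Context {R : realType} {r : R} {f : R -> R}.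
Hypothesis f_gt0 : forall x, r < x -> 0 < f x.
Hypothesis f_cvx : concave_on_from r f.

(* If [f x > f y] with [x < y], the chord through [x, y] vanishes at [y + d];
   concavity puts the positive value [f (y + d)] below it. *)
Lemma concave_pos_nondecreasing x y : r < x -> x <= y -> f x <= f y.
Proof.
move=> rx xy; rewrite leNgt; apply/negP => fyx.
have x_lt_y : x < y.
  by rewrite lt_neqAle xy andbT; apply/eqP => exy; move: fyx; rewrite exy ltxx.
have d_gt0 : 0 < f x - f y by rewrite subr_gt0.
pose d := f y * (y - x) / (f x - f y).
have dE : d * (f x - f y) = f y * (y - x) by rewrite /d; field; rewrite gt_eqF.
have d_ge0 : 0 <= d by rewrite /d divr_ge0 ?mulr_ge0 ?ltW ?f_gt0 //; lra.
have := concave_on_from_chord f_cvx rx xy (_ : y <= y + d) ltac:(lra).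
have fz_gt0 : 0 < f (y + d) by apply: f_gt0; lra.
nra.
Qed.

Lemma concave_pos_growth {a y z} :
  r < a -> a <= y -> y <= z -> a < z -> (y - a) * f z <= (z - a) * f y.
Proof.
move=> ra ay yz az; have := concave_on_from_chord f_cvx ra ay yz az.
have : 0 <= (z - y) * f a by rewrite mulr_ge0 ?subr_ge0 // ltW ?f_gt0.
lra.
Qed.

Lemma concave_pos_shift_le_double {s x} :
  r < s -> 0 < s -> 2 * s <= x -> f (x + s) <= 2 * f x.
Proof.
move=> rs s_gt0 sx; have := concave_pos_growth rs (_ : s <= x) (_ : x <= x + s) ltac:(lra).
have : 0 < f (x + s) by apply: f_gt0; lra.
nra.
Qed.

End PositiveConcave.

Lemma bounded_on_le {R : realType} {A : set R} {g : R -> R} :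
  bounded_on A g -> exists M, forall x, A x -> g x <= M.
Proof. by case=> M gM; exists M => x Ax; exact: le_trans (ler_norm _) (gM x Ax). Qed.

Lemma bounded_on_itv_split {R : realType} {eps c M N : R} {g : R -> R} :
  (forall x, eps < x -> 0 <= g x) ->
  (forall x, eps < x -> x <= c -> g x <= M) ->
  (forall x, c < x -> g x <= N) ->
  bounded_on `]eps, +oo[ g.
Proof.
move=> g_ge0 gM gN; exists (Num.max M N) => x.
rewrite /= in_itv /= andbT => epsx; rewrite ger0_norm ?g_ge0 // le_max.
by case: (leP x c) => xc; [rewrite gM | rewrite gN ?orbT].
Qed.

Lemma ler_pdiv {R : numFieldType} {p P q Q : R} :
  0 <= p -> p <= P -> 0 < Q -> Q <= q -> p / q <= P / Q.
Proof.
move=> p0 pP Q0 Qq; apply: ler_pM => //; first by rewrite invr_ge0 ltW ?(lt_le_trans Q0).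
by rewrite lef_pV2 // posrE (lt_le_trans Q0).
Qed.

Theorem proposition4 (R : realType) (psi : R -> R) :
  in_B psi -> pseudoconcave_near_pinfty psi ->
  exists psi0 : R -> R,
    (forall x : R, 0 < x -> 0 < psi0 x) /\
    concave_on_from 0 psi0 /\
    (forall eps : R, 0 < eps ->
       bounded_on `]eps, +oo[ (fun x => psi x / psi0 x) /\
       bounded_on `]eps, +oo[ (fun x => psi0 x / psi x)).
Proof.
move=> [_ [psi_gt0 [psi_bd psiV_bd]]] [r [r_ge0 [f [f_gt0 [f_cvx [psif_bd fpsi_bd]]]]]].
have [s s_gt_r s_gt0] : exists2 s, r < s & 0 < s by exists (r + 1); lra.
have f_mono := concave_pos_nondecreasing f_gt0 f_cvx.
have fxs_gt0 x : 0 <= x -> 0 < f (x + s) by move=> x0; apply: f_gt0; lra.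
have psi_ge0 x : 0 < x -> 0 <= psi x by move/psi_gt0/ltW.
exists (fun x => f (x + s)); split; first by move=> x /ltW; exact: fxs_gt0.
split; first by apply: concave_on_from_shift f_cvx _; lra.
move=> eps eps_gt0; have [M1 psifM] := bounded_on_le psif_bd.
have [M2 fpsiM] := bounded_on_le fpsi_bd.
split.
- have [B psiB] := bounded_on_le (psi_bd eps r eps_gt0).
  apply: (bounded_on_itv_split (c := r) (M := B / f s) (N := M1)).
  + by move=> x ex; rewrite divr_ge0 ?psi_ge0 ?ltW ?fxs_gt0 //; lra.
  + move=> x ex xr; apply: ler_pdiv.
    * by apply: psi_ge0; lra.
    * by apply: psiB; rewrite /= in_itv /= xr ltW.
    * exact: f_gt0.
    * by apply: f_mono; lra.
  + move=> x rx; apply: le_trans (psifM x _); last by rewrite /= in_itv /= rx.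
    by apply: ler_pdiv; [apply: psi_ge0 | | apply: f_gt0 | apply: f_mono]; lra.
- have [B psiVB] := bounded_on_le (psiV_bd eps eps_gt0).
  apply: (bounded_on_itv_split (c := 2 * s) (M := f (2 * s + s) * B) (N := 2 * M2)).
  + by move=> x ex; rewrite divr_ge0 ?psi_ge0 ?ltW ?fxs_gt0 //; lra.
  + move=> x ex xs; apply: ler_pM.
    * by rewrite ltW // fxs_gt0 //; lra.
    * by rewrite invr_ge0 psi_ge0 //; lra.
    * by apply: f_mono; lra.
    * by apply: psiVB; rewrite /= in_itv /= andbT ltW.
  + move=> x sx; have psix_gt0 : 0 < psi x by apply: psi_gt0; lra.
    apply: (@le_trans _ _ (2 * f x / psi x)).
      rewrite ler_pM2r ?invr_gt0 //.
      exact: (concave_pos_shift_le_double f_gt0 f_cvx s_gt_r s_gt0 (ltW sx)).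
    rewrite -mulrA ler_pM2l //; apply: fpsiM.
    by rewrite /= in_itv /= andbT; lra.
Qed.
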